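(* Let $E_n$ be an $n$-dimensional Euclidean space with inner product $(\cdot,\cdot)$. Let $\Sigma_1,\Sigma_2\subseteq E_n$ be subspaces with bases $\mathbf a_1,\dots,\mathbf a_p$ and $\mathbf b_1,\dots,\mathbf b_q$ respectively, where $p\le q\le n$. If $p<q$, assume in addition that $\mathbf b_1,\dots,\mathbf b_q$ is an orthonormal basis. Let $M$ be the $p\times q$ matrix with entries $M_{ij}=(\mathbf a_i,\mathbf b_j)$, and let $\Gamma_1=\det[(\mathbf a_i,\mathbf a_k)]_{i,k=1}^p$ and $\Gamma_2=\det[(\mathbf b_j,\mathbf b_l)]_{j,l=1}^q$ be the Gram determinants. Then $$\det(MM^T)\le \Gamma_1\,\Gamma_2,$$ and equality holds if and only if $\Sigma_1\subseteq\Sigma_2$. *)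

(* E_n is modelled as row vectors 'rV[R]_n over a real field R
   with the standard inner product (every n-dim Euclidean space is isometric
   to this one). A family of p vectors is a p x n matrix whose rows are the
   vectors. *)
From HB Require Import structures.
From mathcomp Require Import all_boot all_order all_algebra.
Set Implicit Arguments. Unset Strict Implicit. Unset Printing Implicit Defensive.
Import Order.TTheory GRing.Theory Num.Theory.
Local Open Scope ring_scope.

Definition inner (R : ringType) (n : nat) (u v : 'rV[R]_n) : R :=
  (u *m v^T) 0 0.

Definition inner_mx (R : ringType) (n p q : nat)
  (X : 'M[R]_(p, n)) (Y : 'M[R]_(q, n)) : 'M[R]_(p, q) :=
  \matrix_(i < p, j < q) inner (row i X) (row j Y).

Definition gram_det (R : comRingType) (n p : nat) (X : 'M[R]_(p, n)) : R :=
  \det (inner_mx X X).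

(* With P the orthogonal projection onto the row space of B, one has
   det (M M^T) = det ((A P) (A P)^T) * Gamma_2: for p = q by multiplicativity
   of the determinant, for p < q because B has orthonormal rows.  It remains
   to see that projecting the rows of A cannot increase their Gram
   determinant.  After a unimodular Gram-Schmidt change of basis the rows of
   A are orthogonal, so their Gram determinant is the product of the squared
   row lengths, while by Hadamard's inequality that of the projected rows is
   at most the product of the projected squared lengths.  Equality forces
   every row to be fixed by P, i.e. A to lie in the row space of B. *)
From HB Require Import structures.
From mathcomp Require Import all_boot all_order all_algebra ring.
Set Implicit Arguments. Unset Strict Implicit. Unset Printing Implicit Defensive.
Import Order.TTheory GRing.Theory Num.Theory.
Local Open Scope ring_scope.

Section Gram.
Variable R : realFieldType.

Lemma inner_mxE n p q (X : 'M[R]_(p, n)) (Y : 'M[R]_(q, n)) :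
  inner_mx X Y = X *m Y^T.
Proof.
apply/matrixP => i j; rewrite !mxE /inner !mxE; apply: eq_bigr => k _.
by rewrite !mxE.
Qed.

Lemma gram_diagE p n (X : 'M[R]_(p, n)) i :
  (X *m X^T) i i = \sum_k X i k ^+ 2.
Proof. by rewrite mxE; apply: eq_bigr => k _; rewrite mxE expr2. Qed.

Lemma gram_diag_ge0 p n (X : 'M[R]_(p, n)) i : 0 <= (X *m X^T) i i.
Proof. by rewrite gram_diagE sumr_ge0 // => k _; rewrite sqr_ge0. Qed.

Lemma gram_diag_eq0 p n (X : 'M[R]_(p, n)) i :
  (X *m X^T) i i = 0 -> row i X = 0.
Proof.
rewrite gram_diagE => /psumr_eq0P X0; apply/rowP => k; rewrite !mxE.
by apply/eqP; rewrite -sqrf_eq0; apply/eqP/X0 => // j _; rewrite sqr_ge0.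
Qed.

Lemma row_free_gram_diag_gt0 p n (X : 'M[R]_(p, n)) i :
  row_free X -> 0 < (X *m X^T) i i.
Proof.
move=> freeX; rewrite lt_def gram_diag_ge0 andbT; apply/eqP => /gram_diag_eq0.
rewrite rowE => /eqP; rewrite mulmx_free_eq0 // => /eqP/matrixP/(_ 0 i).
by rewrite !mxE !eqxx /= => /eqP; rewrite oner_eq0.
Qed.

Lemma gram_addr_orth p n (Y Z : 'M[R]_(p, n)) : Y *m Z^T = 0 ->
  (Y + Z) *m (Y + Z)^T = Y *m Y^T + Z *m Z^T.
Proof.
move=> YZ; have ZY : Z *m Y^T = 0 by rewrite -[Z]trmxK -trmx_mul YZ trmx0.
by rewrite linearD /= mulmxDl !mulmxDr YZ ZY addr0 add0r.
Qed.

Lemma det_gram_unimodular p n (G : 'M[R]_p) (X : 'M[R]_(p, n)) :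
  \det G = 1 -> \det ((G *m X) *m (G *m X)^T) = \det (X *m X^T).
Proof.
move=> detG; rewrite trmx_mul mulmxA det_mulmx det_tr detG mulr1.
by rewrite -mulmxA det_mulmx detG mul1r.
Qed.

Lemma row_free_det1M p n (G : 'M[R]_p) (X : 'M[R]_(p, n)) :
  \det G = 1 -> row_free X -> row_free (G *m X).
Proof.
move=> detG freeX; rewrite /row_free mxrankMfree // -/(row_free G).
by rewrite row_free_unit unitmxE detG unitr1.
Qed.

(* When d_k = 0 the row k of Z vanishes, so the junk coefficient x_k / 0 = 0
   is harmless. *)
Lemma orth_residual p n (Z : 'M[R]_(p, n)) (d : 'rV[R]_p) (x : 'rV[R]_n) :
  Z *m Z^T = diag_mx d -> exists c : 'rV[R]_p, (x - c *m Z) *m Z^T = 0.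
Proof.
move=> ZZ; exists (\row_k ((x *m Z^T) 0 k / d 0 k)).
rewrite mulmxBl -mulmxA ZZ mul_mx_diag; apply/rowP => k; rewrite !mxE.
have [d0|/divfK-> ] := eqVneq (d 0 k) 0; last by rewrite subrr.
have /gram_diag_eq0 Zk0 : (Z *m Z^T) k k = 0 by rewrite ZZ mxE eqxx mulr1n.
rewrite d0 mulr0 subr0 big1 // => j _.
by have := congr1 (fun v : 'rV_n => v 0 j) Zk0; rewrite !mxE => ->; rewrite mulr0.
Qed.

Lemma gram_schmidt p n (X : 'M[R]_(p, n)) :
  exists G : 'M[R]_p, exists d : 'rV[R]_p,
  [/\ \det G = 1, (G *m X) *m (G *m X)^T = diag_mx d
    & forall i, d 0 i <= (X *m X^T) i i].
Proof.
elim: p X => [|p IHp] X.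
  by exists 1%:M, 0; split; [rewrite det1 | apply/matrixP => [[]] | case].
have -> : X = col_mx (usubmx (X : 'M_(1 + p, n))) (dsubmx (X : 'M_(1 + p, n))).
  by rewrite vsubmxK.
move: (usubmx _) (dsubmx _) => x X'.
have [G' [d' [detG' ZZ le_d']]] := IHp X'.
set Z := G' *m X' in ZZ.
have [c zZ] := orth_residual x ZZ.
set z := x - c *m Z in zZ.
have Zz : Z *m z^T = 0 by rewrite -[Z]trmxK -trmx_mul zZ trmx0.
have xx : x *m x^T = z *m z^T + (c *m Z) *m (c *m Z)^T.
  by rewrite -gram_addr_orth ?subrK // trmx_mul mulmxA zZ mul0mx.
rewrite -[p.+1]/(1 + p)%N.
exists (block_mx 1%:M (- (c *m G')) 0 G'), (row_mx (z *m z^T) d'); split.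
- by rewrite det_ublock det1 detG' mul1r.
- rewrite mul_block_col mul1mx mul0mx add0r mulNmx -mulmxA -/Z -/z.
  rewrite tr_col_mx mul_col_row zZ Zz ZZ diag_mx_row.
  by congr block_mx; apply/matrixP => i j; rewrite !ord1 !mxE eqxx mulr1n.
- move=> i; rewrite tr_col_mx mul_col_row.
  case: (split_ordP i) => j ->; last by rewrite row_mxEr block_mxEdr.
  by rewrite row_mxEl block_mxEul !ord1 xx [leRHS]mxE lerDl gram_diag_ge0.
Qed.

Lemma det_gram_gt0 p n (X : 'M[R]_(p, n)) : row_free X -> 0 < \det (X *m X^T).
Proof.
move=> freeX; have [G [d [detG GG _]]] := gram_schmidt X.
have freeGX : row_free (G *m X) := row_free_det1M detG freeX.
rewrite -(det_gram_unimodular X detG) GG det_diag prodr_gt0 // => i _.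
by have := row_free_gram_diag_gt0 i freeGX; rewrite GG mxE eqxx mulr1n.
Qed.

Lemma hadamard_gram p n (X : 'M[R]_(p, n)) :
  \det (X *m X^T) <= \prod_i (X *m X^T) i i.
Proof.
have [G [d [detG GG le_d]]] := gram_schmidt X.
rewrite -(det_gram_unimodular X detG) GG det_diag; apply: ler_prod => i _.
by rewrite le_d andbT; have := gram_diag_ge0 (G *m X) i; rewrite GG mxE eqxx.
Qed.

Lemma ler_prod_eq (I : finType) (e d : I -> R) :
  (forall i, 0 <= e i <= d i) -> (forall i, 0 < d i) ->
  \prod_i e i = \prod_i d i -> forall i, e i = d i.
Proof.
move=> le_ed d_gt0 eq_prod i; apply/eqP; rewrite eq_le (andP (le_ed i)).2 /=.
rewrite leNgt; apply/negP => lt_i.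
move: eq_prod; rewrite (bigD1 i) //= [in RHS](bigD1 i) //=.
have le_rest : e i * \prod_(j | j != i) e j <= e i * \prod_(j | j != i) d j.
  by rewrite ler_wpM2l ?(andP (le_ed i)).1 // ler_prod.
have lt_i' : e i * \prod_(j | j != i) d j < d i * \prod_(j | j != i) d j.
  by rewrite ltr_pM2r // prodr_gt0.
by move=> eq_prod; have := le_lt_trans le_rest lt_i'; rewrite eq_prod ltxx.
Qed.

Section SymmetricIdempotent.
Variables (n : nat) (P : 'M[R]_n).
Hypotheses (P_sym : P^T = P) (P_idem : P *m P = P).

Lemma gram_proj_split p (X : 'M[R]_(p, n)) :
  X *m X^T = (X *m P) *m (X *m P)^T + (X *m (1%:M - P)) *m (X *m (1%:M - P))^T.
Proof.
rewrite -gram_addr_orth; first by rewrite -mulmxDr addrC subrK mulmx1.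
rewrite !trmx_mul linearB /= trmx1 P_sym -!mulmxA [P *m _]mulmxA.
by rewrite mulmxBr mulmx1 P_idem subrr mul0mx mulmx0.
Qed.

Lemma gram_proj p (X : 'M[R]_(p, n)) : (X *m P) *m (X *m P)^T = X *m P *m X^T.
Proof. by rewrite trmx_mul P_sym mulmxA -[X *m P *m P]mulmxA P_idem. Qed.

Lemma det_gram_proj p (A : 'M[R]_(p, n)) : row_free A ->
  \det ((A *m P) *m (A *m P)^T) <= \det (A *m A^T) /\
  (\det ((A *m P) *m (A *m P)^T) = \det (A *m A^T) <-> A *m P = A).
Proof.
move=> freeA; have [G [d [detG GG _]]] := gram_schmidt A.
have unitG : G \in unitmx by rewrite unitmxE detG unitr1.
set Y := G *m A in GG.
have freeY : row_free Y := row_free_det1M detG freeA.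
pose x i := ((Y *m P) *m (Y *m P)^T) i i.
pose y i := ((Y *m (1%:M - P)) *m (Y *m (1%:M - P))^T) i i.
have dE i : d 0 i = x i + y i.
  have := congr1 (fun M : 'M_p => M i i) (gram_proj_split Y); rewrite /= GG.
  by rewrite [diag_mx d i i]mxE eqxx mulr1n => ->; rewrite mxE.
have d_gt0 i : 0 < d 0 i.
  by have := row_free_gram_diag_gt0 i freeY; rewrite GG mxE eqxx mulr1n.
have le_xd i : 0 <= x i <= d 0 i by rewrite gram_diag_ge0 dE lerDl gram_diag_ge0.
have detAP : \det ((A *m P) *m (A *m P)^T) = \det ((Y *m P) *m (Y *m P)^T).
  by rewrite -(det_gram_unimodular _ detG) mulmxA.
have detA : \det (A *m A^T) = \prod_i d 0 i.
  by rewrite -(det_gram_unimodular _ detG) GG det_diag.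
have le_prod : \prod_i x i <= \prod_i d 0 i by apply: ler_prod => i _.
split; first by rewrite detAP detA (le_trans (hadamard_gram _) le_prod).
split => [eq_det|-> //].
have eq_prod : \prod_i x i = \prod_i d 0 i.
  by apply/le_anti; rewrite le_prod -detA -eq_det detAP hadamard_gram.
have eq_xd := ler_prod_eq le_xd d_gt0 eq_prod.
have YP : Y *m (1%:M - P) = 0.
  apply/row_matrixP => i; rewrite row0 gram_diag_eq0 //.
  by apply: (addrI (x i)); rewrite addr0 -dE eq_xd.
move: YP; rewrite mulmxBr mulmx1 => /subr0_eq/(congr1 (mulmx (invmx G))).
by rewrite /Y !mulmxA mulVmx // !mul1mx.
Qed.

End SymmetricIdempotent.

Section RowSpaceProjection.
Variables (n q : nat) (B : 'M[R]_(q, n)).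
Hypothesis BB_unit : B *m B^T \in unitmx.

Definition row_proj : 'M[R]_n := B^T *m invmx (B *m B^T) *m B.

Lemma row_proj_sym : row_proj^T = row_proj.
Proof. by rewrite !trmx_mul trmxK trmx_inv trmx_mul trmxK mulmxA. Qed.

Lemma row_proj_idem : row_proj *m row_proj = row_proj.
Proof.
rewrite /row_proj -!mulmxA [B *m (B^T *m _)]mulmxA [invmx _ *m (_ *m _)]mulmxA.
by rewrite mulVmx // mul1mx.
Qed.

Lemma row_proj_fixP p (A : 'M[R]_(p, n)) : reflect (A *m row_proj = A) (A <= B)%MS.
Proof.
rewrite /row_proj; apply: (iffP submxP) => [[D ->]|<-]; last first.
  by rewrite mulmxA; eexists.
by rewrite !mulmxA -[D *m B *m B^T]mulmxA -[_ *m invmx _]mulmxA mulmxV ?mulmx1.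
Qed.

Lemma det_gram_inner_square (A : 'M[R]_(q, n)) :
  \det ((A *m B^T) *m (A *m B^T)^T) =
  \det ((A *m row_proj) *m (A *m row_proj)^T) * \det (B *m B^T).
Proof.
rewrite gram_proj ?row_proj_sym ?row_proj_idem // trmx_mul trmxK.
rewrite /row_proj !mulmxA -[A *m B^T *m B *m A^T]mulmxA.
rewrite -[A *m B^T *m _ *m B *m A^T]mulmxA !det_mulmx det_inv.
by move: BB_unit; rewrite unitmxE unitfE => BB_neq0; field.
Qed.

Lemma gram_inner_orthonormal p (A : 'M[R]_(p, n)) : B *m B^T = 1%:M ->
  (A *m B^T) *m (A *m B^T)^T = (A *m row_proj) *m (A *m row_proj)^T.
Proof.
move=> BB1; rewrite gram_proj ?row_proj_sym ?row_proj_idem // /row_proj BB1.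
by rewrite invmx1 mulmx1 trmx_mul trmxK !mulmxA.
Qed.

End RowSpaceProjection.
End Gram.

Theorem theorem1p1 (R : realFieldType) (n p q : nat)
    (A : 'M[R]_(p, n)) (B : 'M[R]_(q, n))
    (hpq : (p <= q)%N) (hqn : (q <= n)%N)
    (hA : row_free A) (hB : row_free B)
    (hON : (p < q)%N -> inner_mx B B = 1%:M) :
  let M := inner_mx A B in
  \det (M *m M^T) <= gram_det A * gram_det B /\
  (\det (M *m M^T) = gram_det A * gram_det B <-> (A <= B)%MS).
Proof.
rewrite /gram_det !inner_mxE.
have BB_gt0 := det_gram_gt0 hB.
have BB_unit : B *m B^T \in unitmx by rewrite unitmxE unitfE lt0r_neq0.
have [le_det eq_det] :=
  det_gram_proj (row_proj_sym B) (row_proj_idem BB_unit) hA.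
have -> : \det ((A *m B^T) *m (A *m B^T)^T) =
    \det ((A *m row_proj B) *m (A *m row_proj B)^T) * \det (B *m B^T).
  move: hpq; rewrite leq_eqVlt => /orP[/eqP eq_pq|/hON].
    by subst q; exact: det_gram_inner_square.
  by rewrite inner_mxE => BB1; rewrite BB1 det1 mulr1 gram_inner_orthonormal.
rewrite ler_pM2r //; split=> //; split.
  by move/(mulIf (lt0r_neq0 BB_gt0))/eq_det/(row_proj_fixP BB_unit).
by move/(row_proj_fixP BB_unit)/eq_det ->.
Qed.
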